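(* Let $x_1=(a_1,b_1),\dots,x_k=(a_k,b_k)\in\mathbb{F}_2^n\times\mathbb{F}_2^n$ be such that $[x_i,x_j]=1$ for all $i\ne j$. Then for every function $f:\mathbb{F}_2^n\to\mathbb{C}$, $$\sum_{i=1}^k\big|\widehat{\Delta_{a_i}f}(b_i)\big|^2\le\|f\|_2^4.$$
   Context: $[(a,b),(c,d)]=a\cdot d+b\cdot c\in\mathbb{F}_2$ is the standard symplectic form. $\Delta_af(x)=f(x+a)\overline{f(x)}$, $\hat g(b)=\mathbb{E}_{x\in\mathbb{F}_2^n}g(x)(-1)^{b\cdot x}$, $\|f\|_2=(\mathbb{E}_x|f(x)|^2)^{1/2}$. *)

From HB Require Import structures.
From mathcomp Require Import all_boot all_order all_algebra.
From mathcomp Require Import reals.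
From mathcomp Require Import complex.
Set Implicit Arguments. Unset Strict Implicit. Unset Printing Implicit Defensive.
Import Order.TTheory GRing.Theory Num.Theory Num.Def.
Local Open Scope ring_scope.

Definition dotF2 (n : nat) (a b : 'rV['F_2]_n) : 'F_2 := \sum_(i < n) a 0 i * b 0 i.

Definition symp (n : nat) (x y : 'rV['F_2]_n * 'rV['F_2]_n) : 'F_2 :=
  dotF2 x.1 y.2 + dotF2 x.2 y.1.

Definition sgnF2 (C : pzRingType) (e : 'F_2) : C := if e == 0 then 1 else -1.

Definition Ex (C : fieldType) (n : nat) (g : 'rV['F_2]_n -> C) : C :=
  (#|{: 'rV['F_2]_n}|%:R)^-1 * \sum_(x : 'rV['F_2]_n) g x.

Definition Delta (R : realType) (n : nat) (a : 'rV['F_2]_n) (f : 'rV['F_2]_n -> R[i])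
  : 'rV['F_2]_n -> R[i] := fun x => f (x + a) * (f x)^*.

Definition fourier (R : realType) (n : nat) (g : 'rV['F_2]_n -> R[i]) (b : 'rV['F_2]_n) : R[i] :=
  Ex (fun x => g x * sgnF2 _ (dotF2 b x)).

Definition norm2 (R : realType) (n : nat) (f : 'rV['F_2]_n -> R[i]) : R[i] :=
  sqrtC (Ex (fun x => `|f x| ^+ 2)).

From HB Require Import structures.
From mathcomp Require Import all_boot all_order all_algebra.
From mathcomp Require Import reals complex ring.
Import Order.TTheory GRing.Theory Num.Theory.
Local Open Scope ring_scope.
Set Implicit Arguments. Unset Strict Implicit.

(** Writing [<u, v> = sum_y u y * conj (v y)], one has
    [hat(Delta_a f)(b) = E_x f(x + a) conj(f x) (-1)^(b.x) = 2^-n <W f, f>] for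
    the Weyl operator [W u (y) = (-1)^(b.y) u (y + a)].  Since
    [W* = (-1)^(a.b) W] and [W^2 = (-1)^(a.b)], the multiple [A = i^(a.b) W] is
    a Hermitian involution, and [[x_i, x_j] = 1] makes the [A_i] pairwise
    anticommute.  For such a family the numbers [r_i = <A_i f, f>] are real,
    and [g = sum_i r_i A_i f] satisfies [<g, g> = (sum_i r_i^2) <f, f>] because
    the cross terms cancel, while [<g, f> = sum_i r_i^2].  Hence, with
    [P = <f, f>], [0 <= <P f - g, P f - g> = P (P^2 - sum_i r_i^2)]. *)

Lemma F2_cases (e : 'F_2) : e = 0 \/ e = 1.
Proof. by case: e => [[|[|?]]] // ?; [left | right]; apply: val_inj. Qed.

Lemma pchar_F2 : (2 \in [pchar 'F_2])%N.
Proof. exact: pchar_Fp. Qed.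

Lemma addrr_F2 n (v : 'rV['F_2]_n) : v + v = 0.
Proof. by apply/rowP => j; rewrite !mxE (addrr_pchar2 pchar_F2). Qed.

Lemma addrKF2 n (v w : 'rV['F_2]_n) : v + w + w = v.
Proof. by rewrite -addrA addrr_F2 addr0. Qed.

Lemma dotF2C n (a b : 'rV['F_2]_n) : dotF2 a b = dotF2 b a.
Proof. by apply: eq_bigr => i _; rewrite mulrC. Qed.

Lemma dotF2Dr n (a b c : 'rV['F_2]_n) : dotF2 a (b + c) = dotF2 a b + dotF2 a c.
Proof. by rewrite /dotF2 -big_split; apply: eq_bigr => i _; rewrite mxE mulrDr. Qed.

Section Signs.
Variable C : pzRingType.

Lemma sgnF2_1 : sgnF2 C 1 = -1.
Proof. by rewrite /sgnF2 oner_eq0. Qed.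

Lemma sgnF2D (e f : 'F_2) : sgnF2 C (e + f) = sgnF2 C e * sgnF2 C f.
Proof.
case: (F2_cases e) => ->; case: (F2_cases f) => ->;
  rewrite ?add0r ?addr0 ?(addrr_pchar2 pchar_F2) /sgnF2 eqxx ?oner_eq0 /=;
  by rewrite ?mulrNN ?mul1r ?mulr1.
Qed.

Lemma sgnF2_sqr (e : 'F_2) : sgnF2 C e * sgnF2 C e = 1.
Proof. by rewrite -sgnF2D (addrr_pchar2 pchar_F2) /sgnF2 eqxx. Qed.

Lemma sgnF2_eq_opp (e f : 'F_2) : e + f = 1 -> sgnF2 C e = - sgnF2 C f.
Proof.
move=> ef; have -> : e = 1 + f by rewrite -ef (addrK_pchar2 pchar_F2).
by rewrite sgnF2D sgnF2_1 mulN1r.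
Qed.

End Signs.

Lemma conj_sgnF2 (C : numClosedFieldType) (e : 'F_2) : (sgnF2 C e)^* = sgnF2 C e.
Proof. by rewrite /sgnF2; case: ifP => _; rewrite ?rmorphN rmorph1. Qed.

Section InnerProduct.
Variables (T : finType) (C : numClosedFieldType).
Implicit Types (u v w : T -> C) (c : C).

Definition fdot u v : C := \sum_y u y * (v y)^*.

Lemma eq_fdot u u' v v' : u =1 u' -> v =1 v' -> fdot u v = fdot u' v'.
Proof. by move=> eq_u eq_v; apply: eq_bigr => y _; rewrite eq_u eq_v. Qed.

Lemma conj_fdot u v : (fdot u v)^* = fdot v u.
Proof.
by rewrite rmorph_sum; apply: eq_bigr => y _; rewrite rmorphM /= conjCK mulrC.
Qed.

Lemma fdotZl c u v : fdot (fun y => c * u y) v = c * fdot u v.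
Proof. by rewrite mulr_sumr; apply: eq_bigr => y _; rewrite mulrA. Qed.

Lemma fdotZr c u v : fdot u (fun y => c * v y) = c^* * fdot u v.
Proof. by rewrite mulr_sumr; apply: eq_bigr => y _; rewrite rmorphM /= mulrCA. Qed.

Lemma fdotNl u v : fdot (fun y => - u y) v = - fdot u v.
Proof. by rewrite -sumrN; apply: eq_bigr => y _; rewrite mulNr. Qed.

Lemma fdotBl u v w : fdot (fun y => u y - v y) w = fdot u w - fdot v w.
Proof. by rewrite -sumrB; apply: eq_bigr => y _; rewrite mulrBl. Qed.

Lemma fdotBr u v w : fdot w (fun y => u y - v y) = fdot w u - fdot w v.
Proof. by rewrite -sumrB; apply: eq_bigr => y _; rewrite rmorphB /= mulrBr. Qed.

Lemma fdot_suml (I : finType) (c : I -> C) (u : I -> T -> C) v :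
  fdot (fun y => \sum_i c i * u i y) v = \sum_i c i * fdot (u i) v.
Proof.
rewrite /fdot; under eq_bigr do rewrite mulr_suml.
rewrite exchange_big; apply: eq_bigr => i _; rewrite mulr_sumr.
by apply: eq_bigr => y _; rewrite mulrA.
Qed.

Lemma fdot_sumr (I : finType) (c : I -> C) (u : I -> T -> C) v :
  fdot v (fun y => \sum_i c i * u i y) = \sum_i (c i)^* * fdot v (u i).
Proof.
rewrite -conj_fdot fdot_suml rmorph_sum; apply: eq_bigr => i _.
by rewrite rmorphM /= conj_fdot.
Qed.

Lemma fdot_ge0 u : 0 <= fdot u u.
Proof. by apply: sumr_ge0 => y _; apply: mul_conjC_ge0. Qed.

Lemma fdot_eq0 u : fdot u u = 0 -> u =1 (fun=> 0).
Proof.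
move=> /eqP; rewrite psumr_eq0 => [/allP u0 y|y _]; last exact: mul_conjC_ge0.
by have /implyP/(_ isT) := u0 y (mem_index_enum y); rewrite mul_conjC_eq0 => /eqP.
Qed.

Lemma fdot_selfadj_real (A : (T -> C) -> T -> C) u :
  (forall v w, fdot (A v) w = fdot v (A w)) -> (fdot (A u) u)^* = fdot (A u) u.
Proof. by move=> A_selfadj; rewrite conj_fdot A_selfadj. Qed.

End InnerProduct.

Lemma sum_antisym_offdiag (R : numDomainType) (I : finType) (d : I -> I -> R) :
  (forall i j, i != j -> d i j = - d j i) -> \sum_i \sum_j d i j = \sum_i d i i.
Proof.
move=> d_anti.
set S := \sum_i \sum_(j | j != i) d i j.
have split_diag : \sum_i \sum_j d i j = \sum_i d i i + S.
  by rewrite -big_split; apply: eq_bigr => i _; rewrite (bigD1 i).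
have S_opp : S = - S.
  rewrite {1}/S (exchange_big_dep predT) //= -sumrN; apply: eq_bigr => j _.
  rewrite -sumrN; apply: eq_big => [i | i ji]; first by rewrite eq_sym.
  by rewrite d_anti // eq_sym.
have /eqP : S *+ 2 = 0 by rewrite mulr2n {1}S_opp addNr.
by rewrite mulrn_eq0 /= split_diag => /eqP ->; rewrite addr0.
Qed.

Section AnticommutingInvolutions.
Variables (T : finType) (C : numClosedFieldType) (k : nat).
Variable A : 'I_k -> (T -> C) -> T -> C.
Hypothesis A_selfadj : forall i u v, fdot (A i u) v = fdot u (A i v).
Hypothesis A_invol : forall i u, A i (A i u) =1 u.
Hypothesis A_anticomm : forall i j u, i != j -> A i (A j u) =1 (fun y => - A j (A i u) y).
Variable f : T -> C.

Let r i := fdot (A i f) f.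
Let g y := \sum_i r i * A i f y.

Lemma fdot_anticomm i j : i != j -> fdot (A i f) (A j f) = - fdot (A j f) (A i f).
Proof.
move=> ij; rewrite -A_selfadj -(A_selfadj i) -fdotNl.
by apply: eq_fdot => // y; rewrite A_anticomm // eq_sym.
Qed.

Lemma fdot_comb_self : fdot g g = (\sum_i r i ^+ 2) * fdot f f.
Proof.
have r_real i : (r i)^* = r i by apply: fdot_selfadj_real.
rewrite fdot_suml; under eq_bigr do rewrite fdot_sumr mulr_sumr.
rewrite sum_antisym_offdiag => [|i j ij]; last first.
  by rewrite !r_real fdot_anticomm //; ring.
rewrite mulr_suml; apply: eq_bigr => i _.
rewrite r_real -A_selfadj (eq_fdot (A_invol i f) (frefl f)); ring.
Qed.

Lemma sum_sqr_fdot_le : \sum_i r i ^+ 2 <= fdot f f ^+ 2.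
Proof.
set P := fdot f f; set S := \sum_i r i ^+ 2.
have P_real : P^* = P by rewrite conj_fdot.
have fdot_gf : fdot g f = S.
  by rewrite fdot_suml; apply: eq_bigr => i _; rewrite expr2.
have fdot_fg : fdot f g = S.
  rewrite -conj_fdot fdot_gf rmorph_sum; apply: eq_bigr => i _.
  by rewrite rmorphXn /= fdot_selfadj_real.
have [P0 | P_neq0] := eqVneq P 0.
  have f0 := fdot_eq0 P0.
  rewrite P0 expr0n /S big1 // => i _.
  by rewrite /r /fdot big1 ?expr0n // => y _; rewrite f0 rmorph0 mulr0.
have P_gt0 : 0 < P by rewrite lt_def P_neq0 fdot_ge0.
have := fdot_ge0 (fun y => P * f y - g y).
rewrite fdotBl !fdotBr !fdotZl !fdotZr fdot_gf fdot_fg fdot_comb_self P_real.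
have -> : P * (P * P) - P * S - (P * S - S * P) = P * (P ^+ 2 - S) by ring.
by rewrite pmulr_rge0 // subr_ge0.
Qed.

End AnticommutingInvolutions.

Section Weyl.
Variables (C : numClosedFieldType) (n : nat).
Implicit Types (a b y : 'rV['F_2]_n) (u v : 'rV['F_2]_n -> C).

Definition weyl a b u y : C := sgnF2 C (dotF2 b y) * u (y + a).

Definition weyl_phase a b : C := if dotF2 a b == 0 then 1 else 'i.

Definition hweyl a b u y : C := weyl_phase a b * weyl a b u y.

Lemma fdot_weyl a b u v :
  fdot (weyl a b u) v = sgnF2 C (dotF2 a b) * fdot u (weyl a b v).
Proof.
rewrite /fdot (reindex_inj (addIr a)) /= mulr_sumr; apply: eq_bigr => y _.
rewrite /weyl addrKF2 dotF2Dr sgnF2D rmorphM /= conj_sgnF2 (dotF2C a b); ring.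
Qed.

Lemma normr_weyl_phase a b : `|weyl_phase a b| = 1.
Proof. by rewrite /weyl_phase; case: ifP => _; rewrite ?normr1 ?normCi. Qed.

Lemma hweyl_selfadj a b u v : fdot (hweyl a b u) v = fdot u (hweyl a b v).
Proof.
rewrite fdotZl fdotZr fdot_weyl mulrA; congr (_ * _).
rewrite /weyl_phase /sgnF2; case: (F2_cases (dotF2 a b)) => ->.
  by rewrite eqxx rmorph1 mulr1.
by rewrite oner_eq0 conjCi mulrN1.
Qed.

Lemma hweyl_invol a b u : hweyl a b (hweyl a b u) =1 u.
Proof.
move=> y; rewrite /hweyl /weyl addrKF2 dotF2Dr sgnF2D (dotF2C b a).
have phase_sqr : weyl_phase a b * weyl_phase a b * sgnF2 C (dotF2 a b) = 1.
  rewrite /weyl_phase; case: (F2_cases (dotF2 a b)) => ->.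
    by rewrite eqxx /sgnF2 eqxx !mulr1.
  by rewrite oner_eq0 sgnF2_1 -expr2 sqrCi mulrNN mulr1.
transitivity (weyl_phase a b * weyl_phase a b * sgnF2 C (dotF2 a b) *
  (sgnF2 C (dotF2 b y) * sgnF2 C (dotF2 b y)) * u y); first ring.
by rewrite phase_sqr sgnF2_sqr !mul1r.
Qed.

Lemma hweyl_anticomm x x' u : symp x x' = 1 ->
  hweyl x'.1 x'.2 (hweyl x.1 x.2 u) =1 (fun y => - hweyl x.1 x.2 (hweyl x'.1 x'.2 u) y).
Proof.
move=> x_x' y; rewrite /hweyl /weyl !dotF2Dr !sgnF2D (addrAC y x'.1 x.1).
by rewrite (dotF2C x'.2 x.1) (sgnF2_eq_opp C x_x'); ring.
Qed.

End Weyl.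

Section FourierOfDerivative.
Variables (R : realType) (n : nat) (f : 'rV['F_2]_n -> R[i]).

Let N : R[i] := (#|{: 'rV['F_2]_n}|%:R)^-1.

Lemma fourier_Delta a b : fourier (Delta a f) b = N * fdot (weyl a b f) f.
Proof. by congr (_ * _); apply: eq_bigr => y _; rewrite /Delta /weyl; ring. Qed.

Lemma sqr_norm_fourier_Delta a b :
  `|fourier (Delta a f) b| ^+ 2 = N ^+ 2 * fdot (hweyl a b f) f ^+ 2.
Proof.
have N_ge0 : 0 <= N by rewrite invr_ge0 ler0n.
rewrite fourier_Delta normrM exprMn ger0_norm //; congr (_ * _).
have hweyl_real := fdot_selfadj_real f (@hweyl_selfadj _ _ a b).
by rewrite [RHS]expr2 -{2}hweyl_real -normCK fdotZl normrM normr_weyl_phase mul1r.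
Qed.

Lemma norm2_expr4 : norm2 f ^+ 4 = N ^+ 2 * fdot f f ^+ 2.
Proof.
rewrite /norm2 (_ : 4 = 2 * 2)%N // exprM sqrtCK -exprMn; congr ((_ * _) ^+ 2).
by apply: eq_bigr => y _; rewrite normCK.
Qed.

End FourierOfDerivative.

Theorem lemma2p15 (R : realType) (n k : nat)
  (x : 'I_k -> 'rV['F_2]_n * 'rV['F_2]_n)
  (hx : forall i j : 'I_k, i != j -> symp (x i) (x j) = 1)
  (f : 'rV['F_2]_n -> R[i]) :
  \sum_(i < k) `|fourier (Delta (x i).1 f) (x i).2| ^+ 2 <= (norm2 f) ^+ 4.
Proof.
rewrite norm2_expr4; under eq_bigr do rewrite sqr_norm_fourier_Delta.
rewrite -mulr_sumr ler_wpM2l ?exprn_ge0 ?invr_ge0 ?ler0n //.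
apply: (@sum_sqr_fdot_le _ _ _ (fun i => hweyl (x i).1 (x i).2)) => i *.
- exact: hweyl_selfadj.
- exact: hweyl_invol.
- by apply: hweyl_anticomm; rewrite hx // eq_sym.
Qed.
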